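(* For every $X\in\{\mathsf{T},\mathsf{S}\}^*$ and every initial preference formula, $\succ_{X\mathsf{T}}\subseteq\succ_{X\mathsf{T}\mathsf{S}\mathsf{T}}$.
   Context: Fix attribute–taxonomy pairs $A_1{:}T_1,\dots,A_d{:}T_d$ with distinct attribute names, where each taxonomy $T_i=(V_i,\le_{V_i})$ is a poset. A t-tuple over a t-schema $S\subseteq\{A_1{:}T_1,\dots,A_d{:}T_d\}$ maps each $A_i$ in $S$ to a value of $V_i$; $\mathcal{D}$ is the set of all t-tuples over all such t-schemas. A preference relation is a binary relation $\succeq$ on $\mathcal{D}$; its strict part is $t_1\succ t_2$ iff $t_1\succeq t_2$ and not $t_2\succeq t_1$. Preferences are given by a formula $F(x,y)=\bigvee_i P_i(x,y)$, a disjunction of statements; each statement $P_i$ is a disjunction of clauses, each clause a satisfiable conjunction of atoms of the forms $x[A_i]\le_{V_i} v$, $x[A_i]\not\le_{V_i} v$, $y[A_i]\le_{V_i} v$, $y[A_i]\not\le_{V_i} v$; the formula induces $t_1\succeq t_2\iff F(t_1,t_2)$. Operator $\mathsf{T}$ maps a formula to one inducing the transitive closure over $\mathcal{D}$ of the induced relation. Operator $\mathsf{S}$ (specificity-based refinement): repeat rounds; in a round, for each statement $P_i$ let $\mathrm{Impl}(P_i)$ be the set of statements $P_j$ such that $P_j(t_2,t_1)\Rightarrow P_i(t_1,t_2)$ for all $t_1,t_2\in\mathcal{D}$ but not conversely; simultaneously replace every $P_i$ with nonempty $\mathrm{Impl}(P_i)$ by $P_i(x,y)\wedge\bigwedge_{P_j\in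 \mathrm{Impl}(P_i)}\neg P_j(y,x)$; stop when no $\mathrm{Impl}$ set is nonempty. After each operator, contradictory clauses and subsumed statements are removed. For $X\in\{\mathsf{T},\mathsf{S}\}^*$, $\succeq_X$ (strict part $\succ_X$) is the relation induced by applying the operators of $X$ in order to the initial formula. *)

From Stdlib Require Import Relations.
From Stdlib Require List.
From mathcomp Require Import all_boot.
Set Implicit Arguments.
Unset Strict Implicit.
Unset Printing Implicit Defensive.

(* A fixed family of attribute-taxonomy pairs A_1:T_1, ..., A_d:T_d.
   Attribute A_i is identified with the index i : 'I_d (so names are distinct);
   each taxonomy T_i = (V_i, <=_{V_i}) is a poset. *)
Record taxonomies := Taxonomies {
  nattr : nat;
  tval : 'I_nattr -> Type;
  tle : forall i, tval i -> tval i -> Prop;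
  tle_refl : forall i (v : tval i), tle v v;
  tle_antisym : forall i (v w : tval i), tle v w -> tle w v -> v = w;
  tle_trans : forall i (u v w : tval i), tle u v -> tle v w -> tle u w
}.

Section Defs.
Variable T : taxonomies.

(* A t-tuple over the t-schema {i | t i <> None}; the type of all of them is D. *)
Definition ttuple := forall i : 'I_(nattr T), option (tval i).

(* Atoms: x[A_i] <= v (a_x = true, a_pos = true), x[A_i] not<= v
   (a_x = true, a_pos = false), and the same for y (a_x = false). *)
Record atom := Atom {
  a_x : bool;
  a_attr : 'I_(nattr T);
  a_val : tval a_attr;
  a_pos : bool
}.

Definition eval_atom (a : atom) (t1 t2 : ttuple) : Prop :=
  match (if a_x a then t1 else t2) (a_attr a) with
  | Some w => if a_pos a then tle w (a_val a) else ~ tle w (a_val a)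
  | None => False
  end.

Definition clause := seq atom.
Definition eval_clause (c : clause) (t1 t2 : ttuple) : Prop :=
  forall a, List.In a c -> eval_atom a t1 t2.
Definition clause_sat (c : clause) : Prop :=
  exists t1 t2, eval_clause c t1 t2.

(* Syntactic statements (disjunctions of clauses) and formulas
   (disjunctions of statements). *)
Definition sstatement := seq clause.
Definition sformula := seq sstatement.
Definition well_formed (F : sformula) : Prop :=
  forall s c, List.In s F -> List.In c s -> clause_sat c.

Definition stmt := ttuple -> ttuple -> Prop.
Definition formula := seq stmt.

Definition eval_sstatement (s : sstatement) : stmt :=
  fun t1 t2 => exists c, List.In c s /\ eval_clause c t1 t2.
Definition sem (F : sformula) : formula := map eval_sstatement F.

Definition Fnil : stmt := fun _ _ => False.

Definition induced (F : formula) : relation ttuple :=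
  fun t1 t2 => exists k, k < size F /\ nth Fnil F k t1 t2.

Definition strict (R : relation ttuple) : relation ttuple :=
  fun t1 t2 => R t1 t2 /\ ~ R t2 t1.

Definition implies (P Q : stmt) : Prop := forall t1 t2, P t1 t2 -> Q t1 t2.

(* Removal of subsumed statements: keep a subsequence G of F such that every
   removed statement is subsumed by a kept one and no kept statement is
   subsumed by another kept one.  (Removal of contradictory clauses does not
   change the denotation of a statement.) *)
Definition cleanup (F G : formula) : Prop :=
  exists m : bitseq, size m = size F /\ G = mask m F /\
    (forall k, k < size F -> nth false m k = false ->
       exists l, l < size G /\ implies (nth Fnil F k) (nth Fnil G l)) /\
    (forall a b, a < size G -> b < size G -> a <> b ->
       ~ implies (nth Fnil G a) (nth Fnil G b)).

Definition T_result (F G : formula) : Prop :=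
  forall t1 t2, induced G t1 t2 <-> clos_trans ttuple (induced F) t1 t2.

Definition in_Impl (F : formula) (i j : nat) : Prop :=
  (forall t1 t2, nth Fnil F j t2 t1 -> nth Fnil F i t1 t2) /\
  ~ (forall t1 t2, nth Fnil F i t1 t2 -> nth Fnil F j t2 t1).

Definition S_round (F : formula) : formula :=
  map (fun i => fun t1 t2 =>
         nth Fnil F i t1 t2 /\
         (forall j, j < size F -> in_Impl F i j -> ~ nth Fnil F j t2 t1))
      (iota 0 (size F)).

Definition S_stop (F : formula) : Prop :=
  forall i j, i < size F -> j < size F -> ~ in_Impl F i j.

Inductive S_rounds : formula -> formula -> Prop :=
| S_done F : S_stop F -> S_rounds F F
| S_more F H : ~ S_stop F -> S_rounds (S_round F) H -> S_rounds F H.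

Inductive op := OpT | OpS.

Definition step (o : op) (F G : formula) : Prop :=
  match o with
  | OpT => exists G0, T_result F G0 /\ cleanup G0 G
  | OpS => exists G0, S_rounds F G0 /\ cleanup G0 G
  end.

Inductive run : seq op -> formula -> formula -> Prop :=
| run_nil F : run [::] F F
| run_cons o X F G H : step o F G -> run X G H -> run (o :: X) F H.

End Defs.

From Stdlib Require Import Relations.
From mathcomp Require Import all_boot.

(* The relation induced after a final T is transitive.  One round of S only
   removes pairs, and never a strict one, since a strict pair (t1, t2) has no
   statement holding on (t2, t1) to refine against; cleanup does not change the
   induced relation.  So the relation after S lies between the strict part and
   the whole of the transitive relation, and so does its transitive closure:
   the strict part survives. *)

Set Implicit Arguments.
Unset Strict Implicit.
Unset Printing Implicit Defensive.

Section Preferences.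
Variable Tx : taxonomies.
Implicit Types (F G H : formula Tx) (P : stmt Tx).

Lemma In_nth_formula F k : k < size F -> List.In (nth (@Fnil Tx) F k) F.
Proof.
elim: F k => [|P F IH] [|k] //= ltkF; [by left | right; exact: IH].
Qed.

Lemma nth_formula_In F P : List.In P F -> exists2 k, k < size F & nth (@Fnil Tx) F k = P.
Proof.
elim: F => [|Q F IH] //= [-> | /IH [k ltkF <-]]; first by exists 0.
by exists k.+1.
Qed.

Lemma inducedP F t1 t2 : induced F t1 t2 <-> exists2 P, List.In P F & P t1 t2.
Proof.
split=> [[k [ltkF Pk]] | [P /nth_formula_In [k ltkF <-] Pk]]; last by exists k.
by exists (nth (@Fnil Tx) F k) => //; exact: In_nth_formula.
Qed.

Lemma In_mask_formula (m : bitseq) F P : List.In P (mask m F) -> List.In P F.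
Proof.
elim: F m => [|Q F IH] [|[] m] //=; last by move/IH; right.
by case=> [-> | /IH]; [left | right].
Qed.

Lemma In_nth_mask_formula (m : bitseq) F k :
  k < size F -> nth false m k -> List.In (nth (@Fnil Tx) F k) (mask m F).
Proof.
elim: F m k => [|Q F IH] [|[] m] [|k] //= ltkF mk; by [left | right; exact: IH | exact: IH].
Qed.

Lemma cleanup_induced F G : cleanup F G -> forall t1 t2, induced F t1 t2 <-> induced G t1 t2.
Proof.
move=> [m [_ [-> [kept _]]]] t1 t2.
split=> [[k [ltkF Pk]] | /inducedP [P /In_mask_formula PF Pt]]; last by apply/inducedP; exists P.
case mk: (nth false m k).
- by apply/inducedP; exists (nth (@Fnil Tx) F k) => //; exact: In_nth_mask_formula.
- by have [l [ltlG Pl]] := kept k ltkF mk; exists l; split; last exact: Pl.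
Qed.

Lemma nth_S_round F k t1 t2 : k < size F ->
  nth (@Fnil Tx) (S_round F) k t1 t2 <->
  nth (@Fnil Tx) F k t1 t2 /\ (forall j, j < size F -> in_Impl F k j -> ~ nth (@Fnil Tx) F j t2 t1).
Proof. by move=> ltkF; rewrite /S_round (nth_map 0) ?size_iota // nth_iota. Qed.

Lemma size_S_round F : size (S_round F) = size F.
Proof. by rewrite size_map size_iota. Qed.

Lemma S_round_incl F : inclusion _ (induced (S_round F)) (induced F).
Proof.
move=> t1 t2 [k [ltkF /(nth_S_round _ _ _) Pk]]; rewrite size_S_round in ltkF.
by exists k; split; last by case: (Pk ltkF).
Qed.

Lemma strict_S_round F t1 t2 : strict (induced F) t1 t2 -> induced (S_round F) t1 t2.
Proof.
move=> [[k [ltkF Pk]] not21]; exists k; rewrite size_S_round; split=> //.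
by apply/nth_S_round => //; split=> // j ltjF _ Pj; apply: not21; exists j.
Qed.

Lemma S_rounds_incl F G : S_rounds F G -> inclusion _ (induced G) (induced F).
Proof. by elim=> [F' _ | F' G' _ _ IH] t1 t2 // /IH /S_round_incl. Qed.

Lemma S_rounds_strict F G t1 t2 : S_rounds F G -> strict (induced F) t1 t2 -> induced G t1 t2.
Proof.
move=> FG; elim: FG t1 t2 => [F' _ | F' G' _ _ IH] t1 t2 strictF; first by case: strictF.
apply: IH; split; first exact: strict_S_round.
by case: strictF => _ not21 /S_round_incl.
Qed.

Lemma step_S_incl F G : step OpS F G -> inclusion _ (induced G) (induced F).
Proof.
by move=> [G0 [FG0 cG0]] t1 t2 /(cleanup_induced cG0) /(S_rounds_incl FG0).
Qed.

Lemma step_S_strict F G t1 t2 : step OpS F G -> strict (induced F) t1 t2 -> induced G t1 t2.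
Proof.
by move=> [G0 [FG0 cG0]] /(S_rounds_strict FG0) /(cleanup_induced cG0).
Qed.

Lemma step_T_clos_trans F G t1 t2 :
  step OpT F G -> induced G t1 t2 <-> clos_trans _ (induced F) t1 t2.
Proof. by move=> [G0 [FG0 cG0]]; rewrite -(cleanup_induced cG0). Qed.

Lemma step_T_transitive F G : step OpT F G -> Relation_Definitions.transitive _ (induced G).
Proof.
move=> FG t1 t2 t3 /(step_T_clos_trans _ _ FG) c12 /(step_T_clos_trans _ _ FG) c23.
by apply/(step_T_clos_trans _ _ FG); exact: t_trans c12 c23.
Qed.

Lemma step_T_extensive F G : step OpT F G -> inclusion _ (induced F) (induced G).
Proof. by move=> FG t1 t2 F12; apply/(step_T_clos_trans _ _ FG); exact: t_step. Qed.

Lemma step_T_least F G (R : relation (ttuple Tx)) :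
  step OpT F G -> inclusion _ (induced F) R -> Relation_Definitions.transitive _ R ->
  inclusion _ (induced G) R.
Proof.
move=> FG FR transR t1 t2 /(step_T_clos_trans _ _ FG).
by elim=> [x y /FR // | x y z _ Rxy _ Ryz]; exact: transR Ryz.
Qed.

Lemma run_rcons X o F G : run (X ++ [:: o]) F G -> exists2 F', run X F F' & step o F' G.
Proof.
elim: X F => [|o' X IH] F /= FG; inversion FG as [|o1 X1 F1 G1 H1 FG1 G1G]; subst.
- by inversion G1G; subst; exists F => //; constructor.
- by have [F' G1F' F'G] := IH _ G1G; exists F' => //; econstructor; eauto.
Qed.

Lemma run_pair o1 o2 F H : run [:: o1; o2] F H -> exists2 G, step o1 F G & step o2 G H.
Proof.
move=> FH; inversion FH as [|o X F1 G H1 FG GH]; subst.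
inversion GH as [|o X G1 H2 H1 GH2 H2H]; subst; inversion H2H; subst.
by exists G.
Qed.

End Preferences.

Theorem mainTheorem4 (Tx : taxonomies) (F0 : sformula Tx) (X : seq op)
    (G H : formula Tx) :
  well_formed F0 ->
  run (X ++ [:: OpT]) (sem F0) G ->
  run [:: OpS; OpT] G H ->
  forall t1 t2 : ttuple Tx,
    strict (induced G) t1 t2 -> strict (induced H) t1 t2.
Proof.
move=> _ /run_rcons [F' _ F'G] /run_pair [G' GG' G'H] t1 t2 strictG.
have transG := step_T_transitive F'G.
have HG : inclusion _ (induced H) (induced G) := step_T_least G'H (step_S_incl GG') transG.
split; last by case: strictG => _ notG21 /HG.
exact/(step_T_extensive G'H)/(step_S_strict GG').
Qed.
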